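(* Let $T$ be a complete theory with monster model $\mathcal{U}$, $A\subseteq\mathcal{U}$ small, $\mu\in\mathfrak{M}_x(\mathcal{U})$, $\nu\in\mathfrak{M}_y(\mathcal{U})$. If $\mu$ is smooth over $A$ and $\mu\geq_{\mathbb{E},A}\nu$, then $\nu$ is smooth over $A$.
   Context: For $C\subseteq\mathcal{U}$, $\mathcal{L}_x(C)$ is the Boolean algebra of formulas in $x$ with parameters from $C$ modulo $T$, embedded in $\mathcal{L}_{xy}(C)$ via $\varphi(x)\mapsto\varphi(x)\wedge y=y$; $\mathfrak{M}_x(C)$ is the set of finitely additive probability measures on $\mathcal{L}_x(C)$. For $\omega\in\mathfrak{M}_{xy}(C)$, $\pi_x(\omega)(\varphi(x))=\omega(\varphi(x)\wedge y=y)$ (similarly $\pi_y$); $\omega|_D$ is restriction. $\mu\geq_{\mathbb{E},A}\nu$ means there is $\lambda\in\mathfrak{M}_{xy}(A)$ with $\pi_x(\lambda)=\mu|_A$ such that every $\omega\in\mathfrak{M}_{xy}(\mathcal{U})$ with $\omega|_A=\lambda$ and $\pi_x(\omega)=\mu$ satisfies $\pi_y(\omega)=\nu$. A global measure $\mu$ is smooth over $A$ if every global measure (in the same variables) agreeing with $\mu$ on $\mathcal{L}_x(A)$ equals $\mu$. *)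

From mathcomp Require Import all_boot.
From Stdlib Require Import Reals.

Set Implicit Arguments.
Unset Strict Implicit.
Unset Printing Implicit Defensive.

Record Language := {
  Fn : Type; Rl : Type;
  fn_ar : Fn -> nat; rl_ar : Rl -> nat }.

Record Structure (L : Language) := {
  carrier :> Type;
  fI : forall f : Fn L, ('I_(fn_ar f) -> carrier) -> carrier;
  rI : forall r : Rl L, ('I_(rl_ar r) -> carrier) -> Prop }.

Section Syntax.
Variables (L : Language) (M : Structure L).

Inductive term : Type :=
| Var : nat -> term
| Par : M -> term
| App : forall f : Fn L, ('I_(fn_ar f) -> term) -> term.

Inductive formula : Type :=
| Fals : formula
| Eqf : term -> term -> formula
| Relf : forall r : Rl L, ('I_(rl_ar r) -> term) -> formula
| Neg : formula -> formula
| And : formula -> formula -> formula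
| Ex : nat -> formula -> formula.

Fixpoint teval (v : nat -> M) (t : term) : M :=
  match t with
  | Var i => v i
  | Par m => m
  | App f a => fI (fun k => teval v (a k))
  end.

Definition upd (v : nat -> M) (i : nat) (a : M) : nat -> M :=
  fun j => if j == i then a else v j.

Fixpoint sat (v : nat -> M) (p : formula) : Prop :=
  match p with
  | Fals => False
  | Eqf t1 t2 => teval v t1 = teval v t2
  | Relf r a => rI (fun k => teval v (a k))
  | Neg q => ~ sat v q
  | And q1 q2 => sat v q1 /\ sat v q2
  | Ex i q => exists a : M, sat (upd v i a) q
  end.

Fixpoint tfv (t : term) (i : nat) : Prop :=
  match t with
  | Var j => j = i
  | Par _ => False
  | App f a => exists k, tfv (a k) i
  end.

Fixpoint ffv (p : formula) (i : nat) : Prop :=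
  match p with
  | Fals => False
  | Eqf t1 t2 => tfv t1 i \/ tfv t2 i
  | Relf r a => exists k, tfv (a k) i
  | Neg q => ffv q i
  | And q1 q2 => ffv q1 i \/ ffv q2 i
  | Ex j q => j <> i /\ ffv q i
  end.

Fixpoint tpar (t : term) (c : M) : Prop :=
  match t with
  | Var _ => False
  | Par m => m = c
  | App f a => exists k, tpar (a k) c
  end.

Fixpoint fpar (p : formula) (c : M) : Prop :=
  match p with
  | Fals => False
  | Eqf t1 t2 => tpar t1 c \/ tpar t2 c
  | Relf r a => exists k, tpar (a k) c
  | Neg q => fpar q c
  | And q1 q2 => fpar q1 c \/ fpar q2 c
  | Ex _ q => fpar q c
  end.

(** * Monster model: kappa-saturated and strongly kappa-homogeneous,
    kappa represented by a type K. *)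
Definition small (K : Type) (A : M -> Prop) : Prop :=
  ~ exists g : K -> M, injective g /\ forall k, A (g k).

Definition saturated (K : Type) : Prop :=
  forall (B : M -> Prop), small K B ->
  forall p : formula -> Prop,
    (forall q, p q -> (forall i, ffv q i -> i = 0%N) /\ (forall c, fpar q c -> B c)) ->
    (forall l : seq formula, (forall q, List.In q l -> p q) ->
       exists v, forall q, List.In q l -> sat v q) ->
    exists v, forall q, p q -> sat v q.

Definition automorphism (s : M -> M) : Prop :=
  (exists g : M -> M, cancel s g /\ cancel g s) /\
  (forall f (a : 'I_(fn_ar f) -> M), s (fI a) = fI (fun k => s (a k))) /\
  (forall r (a : 'I_(rl_ar r) -> M), rI a <-> rI (fun k => s (a k))).

Definition strongly_homogeneous (K : Type) : Prop :=
  forall (B : M -> Prop), small K B ->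
  forall h : M -> M,
    (forall q, (forall c, ~ fpar q c) ->
       forall v : nat -> M, (forall i, B (v i)) ->
       (sat v q <-> sat (fun i => h (v i)) q)) ->
    exists s, automorphism s /\ forall b, B b -> s b = h b.

Definition monster (K : Type) : Prop :=
  (exists e : nat -> K, injective e) /\
  (~ exists g : K -> (Fn L + Rl L)%type, injective g) /\
  saturated K /\ strongly_homogeneous K.

(** L_x(C) (formulas in the variables x with parameters from C, modulo T = Th(M))
    is represented by the C-definable sets of assignments nat -> M defined by a
    formula whose free variables lie in x.  The embedding L_x(C) -> L_xy(C),
    phi(x) |-> phi(x) /\ y = y, is then literally the inclusion. *)
Definition Lform (C : M -> Prop) (x : seq nat) (S : (nat -> M) -> Prop) : Prop :=
  exists q : formula, (forall i, ffv q i -> i \in x) /\ (forall c, fpar q c -> C c) /\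
    S = (fun v => sat v q).

Definition setTM : M -> Prop := fun _ => True.

Definition is_kmeasure (D : ((nat -> M) -> Prop) -> Prop)
  (m : ((nat -> M) -> Prop) -> R) : Prop :=
  (forall S, D S -> (0 <= m S)%R) /\
  m (fun _ => True) = 1%R /\
  (forall S1 S2, D S1 -> D S2 -> (forall v, S1 v -> S2 v -> False) ->
     m (fun v => S1 v \/ S2 v) = (m S1 + m S2)%R).

Definition agree (D : ((nat -> M) -> Prop) -> Prop) (m1 m2 : ((nat -> M) -> Prop) -> R) :=
  forall S, D S -> m1 S = m2 S.

Definition smooth (A : M -> Prop) (x : seq nat) (mu : ((nat -> M) -> Prop) -> R) : Prop :=
  forall mu', is_kmeasure (Lform setTM x) mu' ->
    agree (Lform A x) mu' mu -> agree (Lform setTM x) mu' mu.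

(** mu >=_{E,A} nu.  pi_x(omega) = mu means omega agrees with mu on L_x(U)
    (embedded in L_xy(U)); omega|_A = lambda means agreement on L_xy(A). *)
Definition E_ge (A : M -> Prop) (x y : seq nat)
  (mu nu : ((nat -> M) -> Prop) -> R) : Prop :=
  exists lam, is_kmeasure (Lform A (x ++ y)) lam /\
    agree (Lform A x) lam mu /\
    forall omega, is_kmeasure (Lform setTM (x ++ y)) omega ->
      agree (Lform A (x ++ y)) omega lam ->
      agree (Lform setTM x) omega mu ->
      agree (Lform setTM y) omega nu.

End Syntax.

From mathcomp Require Import all_boot.
From Stdlib Require Import Reals Lra.
From mathcomp Require Import boolp classical_sets.

(* By the Łoś–Marczewski extension theorem, a finitely additive probability on a
   Boolean algebra of sets extends to any larger algebra, taking at a prescribed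
   set the value of its inner measure.  Hence a smooth mu coincides on every
   formula with the inner measure computed from mu|_A.  Given nu' agreeing with
   nu over A and a formula chi(y), extend lambda to a global omega with
   omega(chi) = inner_lambda(chi).  Inner regularity of mu gives pi_x(omega) >= mu,
   hence pi_x(omega) = mu and so pi_y(omega) = nu.  An A-formula phi(x,y) below chi
   lies below its projection (exists x) phi, an A-formula in y still below chi,
   whence nu(chi) <= nu'(chi); the same for ~chi gives equality. *)

Set Implicit Arguments.
Unset Strict Implicit.
Unset Printing Implicit Defensive.

Local Open Scope classical_set_scope.
Local Open Scope R_scope.

Definition Rlub (P : set R) : R :=
  match pselect (bound P /\ exists r, P r) with
  | left h => proj1_sig (completeness P h.1 h.2)
  | right _ => 0
  end.

Lemma Rlub_is_lub P : bound P -> (exists r, P r) -> is_lub P (Rlub P).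
Proof.
move=> ub ne; rewrite /Rlub; case: pselect => [h | []]; last by split.
exact: proj2_sig.
Qed.

Section SetAlgebra.
Variables (L : Language) (M : Structure L).
Local Notation point := (nat -> M).
Implicit Types (B D : set (set point)) (m : set point -> R) (S E a b c : set point).

Definition setalgebra B :=
  [/\ B setT, (forall S, B S -> B (~` S)) & (forall S1 S2, B S1 -> B S2 -> B (S1 `&` S2))].

Section Algebra.
Variables (B : set (set point)).
Hypothesis hB : setalgebra B.

Lemma algebraT : B setT. Proof. by case: hB. Qed.
Lemma algebraC S : B S -> B (~` S). Proof. by case: hB => _ + _; apply. Qed.
Lemma algebraI S1 S2 : B S1 -> B S2 -> B (S1 `&` S2). Proof. by case: hB => _ _; apply. Qed.
Lemma algebra0 : B set0. Proof. by rewrite -setCT; exact/algebraC/algebraT. Qed.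
Lemma algebraD S1 S2 : B S1 -> B S2 -> B (S1 `\` S2).
Proof. by move=> h1 h2; apply/algebraI/algebraC. Qed.
Lemma algebraU S1 S2 : B S1 -> B S2 -> B (S1 `|` S2).
Proof.
by move=> h1 h2; rewrite -[_ `|` _]setCK setCU; apply/algebraC/algebraI; apply/algebraC.
Qed.

End Algebra.

Section Kmeasure.
Variables (B : set (set point)) (m : set point -> R).
Hypotheses (hB : setalgebra B) (hm : is_kmeasure B m).

Lemma kmeasure_ge0 S : B S -> 0 <= m S. Proof. by case: hm => + _; apply. Qed.
Lemma kmeasureT : m setT = 1. Proof. by case: hm => _ []. Qed.
Lemma kmeasureU S1 S2 : B S1 -> B S2 -> S1 `<=` ~` S2 -> m (S1 `|` S2) = m S1 + m S2.
Proof. by case: hm => _ [_]; apply. Qed.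

Lemma kmeasure_split S a : B S -> B a -> m S = m (S `&` a) + m (S `\` a).
Proof.
move=> hS ha; rewrite -{1}(setUIDK S a) kmeasureU //.
- exact: algebraI.
- exact: algebraD.
- by move=> v [_ ?] [].
Qed.

Lemma kmeasureC S : B S -> m (~` S) = 1 - m S.
Proof.
move=> hS; have := kmeasure_split (algebraT hB) hS.
by rewrite setTI setTD kmeasureT; lra.
Qed.

Lemma kmeasure0 : m set0 = 0.
Proof. by rewrite -setCT kmeasureC ?kmeasureT; [lra | exact: algebraT]. Qed.

Lemma kmeasure_le S1 S2 : B S1 -> B S2 -> S1 `<=` S2 -> m S1 <= m S2.
Proof.
move=> h1 h2 le12; rewrite (kmeasure_split h2 h1) setIidr //.
have := kmeasure_ge0 (algebraD hB h2 h1); lra.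
Qed.

Lemma kmeasure_le1 S : B S -> m S <= 1.
Proof. by move=> hS; rewrite -kmeasureT; apply: kmeasure_le => //; exact: algebraT. Qed.

End Kmeasure.

Lemma kmeasure_sub B D m : B `<=` D -> is_kmeasure D m -> is_kmeasure B m.
Proof.
move=> BD [h0 [h1 hU]]; split=> [S /BD /h0 //|]; split=> // S1 S2 /BD + /BD.
exact: hU.
Qed.

Lemma agree_of_le B m1 m2 : setalgebra B -> is_kmeasure B m1 -> is_kmeasure B m2 ->
  (forall S, B S -> m1 S <= m2 S) -> agree B m1 m2.
Proof.
move=> hB h1 h2 le12 S hS; have := le12 _ (algebraC hB hS).
rewrite !(kmeasureC hB) //; have := le12 _ hS; lra.
Qed.


Definition inner B m E := Rlub (m @` [set a | B a /\ a `<=` E]).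
Definition outer B m E := 1 - inner B m (~` E).

Section InnerOuter.
Variables (B : set (set point)) (m : set point -> R).
Hypotheses (hB : setalgebra B) (hm : is_kmeasure B m).

Lemma inner_is_lub E : is_lub (m @` [set a | B a /\ a `<=` E]) (inner B m E).
Proof.
apply: Rlub_is_lub; first by exists 1; move=> _ [a [ha _] <-]; exact: (kmeasure_le1 hB hm).
by exists (m set0), set0; split; [exact: algebra0 | exact: sub0set].
Qed.

Lemma inner_ub E a : B a -> a `<=` E -> m a <= inner B m E.
Proof. by move=> ha aE; apply: (inner_is_lub E).1; exists a. Qed.

Lemma inner_le E r : (forall a, B a -> a `<=` E -> m a <= r) -> inner B m E <= r.
Proof. by move=> ub; apply: (inner_is_lub E).2 => _ [a [ha aE] <-]; exact: ub. Qed.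

Lemma inner_id S : B S -> inner B m S = m S.
Proof.
move=> hS; apply: Rle_antisym; last exact: inner_ub.
by apply: inner_le => a ha aS; exact: (kmeasure_le hB hm).
Qed.

Lemma inner_ge0 E : 0 <= inner B m E.
Proof. by rewrite -(kmeasure0 hB hm); apply: inner_ub; [exact: algebra0 | exact: sub0set]. Qed.

Lemma outer_lb E f : B f -> E `<=` f -> outer B m E <= m f.
Proof.
move=> hf Ef; have := inner_ub (algebraC hB hf) (subsetC Ef).
by rewrite (kmeasureC hB) // /outer; lra.
Qed.

Lemma outer_ge0 E : 0 <= outer B m E.
Proof.
rewrite /outer; have : inner B m (~` E) <= 1; last lra.
by apply: inner_le => a ha _; exact: (kmeasure_le1 hB hm).
Qed.

Lemma innerU E1 E2 a : B a -> E1 `<=` a -> E2 `<=` ~` a ->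
  inner B m (E1 `|` E2) = inner B m E1 + inner B m E2.
Proof.
move=> ha E1a E2a; apply: Rle_antisym.
- apply: inner_le => e he eE; rewrite (kmeasure_split hB hm he ha).
  have e1 : m (e `&` a) <= inner B m E1.
    apply: inner_ub; first exact: algebraI.
    by move=> v [/eE [//|/E2a]].
  have e2 : m (e `\` a) <= inner B m E2.
    apply: inner_ub; first exact: algebraD.
    by move=> v [/eE [/E1a|//]].
  lra.
- have sum_ub e1 e2 : B e1 -> B e2 -> e1 `<=` E1 -> e2 `<=` E2 ->
      m e1 + m e2 <= inner B m (E1 `|` E2).
    move=> h1 h2 e1E e2E; rewrite -(kmeasureU hm) //; last by move=> v /e1E/E1a + /e2E/E2a.
    by apply: inner_ub; [exact: algebraU | exact: setUSS].
  suff : inner B m E2 <= inner B m (E1 `|` E2) - inner B m E1 by lra.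
  apply: inner_le => e2 h2 e2E.
  suff : inner B m E1 <= inner B m (E1 `|` E2) - m e2 by lra.
  apply: inner_le => e1 h1 e1E; have := sum_ub _ _ h1 h2 e1E e2E; lra.
Qed.

Lemma inner_outer_split S b : B b -> inner B m (b `&` S) + outer B m (b `\` S) = m b.
Proof.
move=> hb; rewrite /outer setCD.
have -> : ~` b `|` S = ~` b `|` (b `&` S).
  by apply/seteqP; split=> v /=; case: (pselect (b v)); tauto.
have hCb := algebraC hB hb.
rewrite (innerU (a := ~` b)) //; last by move=> v [bv _] /(_ bv).
rewrite (inner_id hCb) (kmeasureC hB) //; lra.
Qed.

Lemma outerU E1 E2 a : B a -> E1 `<=` a -> E2 `<=` ~` a ->
  outer B m (E1 `|` E2) = outer B m E1 + outer B m E2.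
Proof.
move=> ha E1a E2a; rewrite /outer.
have -> : ~` (E1 `|` E2) = (a `\` E1) `|` (~` a `\` E2).
  apply/seteqP; split=> v; move: (E1a v) (E2a v) => /=; case: (pselect (a v)); tauto.
have -> : ~` E1 = (a `\` E1) `|` ~` a.
  apply/seteqP; split=> v; move: (E1a v) => /=; case: (pselect (a v)); tauto.
have -> : ~` E2 = a `|` (~` a `\` E2).
  apply/seteqP; split=> v; move: (E2a v) => /=; case: (pselect (a v)); tauto.
have hCa := algebraC hB ha.
rewrite !(innerU (a := a)) // (inner_id ha) (inner_id hCa) (kmeasureC hB) //; lra.
Qed.

End InnerOuter.

Definition adjoin B S : set (set point) :=
  [set c | exists a b, [/\ B a, B b & c = (a `&` S) `|` (b `\` S)]].

Definition adjoin_measure B m S c := inner B m (c `&` S) + outer B m (c `\` S).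

Lemma adjoin_le B D S : setalgebra D -> B `<=` D -> D S -> adjoin B S `<=` D.
Proof.
move=> hD BD hS _ [a [b [/BD ha /BD hb ->]]].
by apply: algebraU => //; [apply: algebraI | apply: algebraD].
Qed.

Section Adjoin.
Variables (B : set (set point)) (m : set point -> R) (S : set point).
Hypotheses (hB : setalgebra B) (hm : is_kmeasure B m).

Lemma adjoin_ge : B `<=` adjoin B S.
Proof. by move=> a ha; exists a, a; split; rewrite ?setUIDK. Qed.

Lemma adjoin_self : adjoin B S S.
Proof.
exists setT, set0; split; [exact: algebraT | exact: algebra0 |].
by rewrite setTI set0D setU0.
Qed.

Lemma adjoin_algebra : setalgebra (adjoin B S).
Proof.
split; first by apply/adjoin_ge; exact: algebraT.
- move=> _ [a [b [ha hb ->]]]; exists (~` a), (~` b).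
  split; [exact: algebraC | exact: algebraC |].
  by apply/seteqP; split=> v /=; case: (pselect (S v)); tauto.
- move=> _ _ [a1 [b1 [ha1 hb1 ->]]] [a2 [b2 [ha2 hb2 ->]]].
  exists (a1 `&` a2), (b1 `&` b2); split; [exact: algebraI | exact: algebraI |].
  by apply/seteqP; split=> v /=; case: (pselect (S v)); tauto.
Qed.

Lemma adjoin_measure_agree : agree B (adjoin_measure B m S) m.
Proof. by move=> b hb; apply: inner_outer_split. Qed.

Lemma adjoin_measure_self : adjoin_measure B m S S = inner B m S.
Proof.
rewrite /adjoin_measure setIid setDv.
have : outer B m set0 <= m set0 by apply: outer_lb => //; exact: algebra0.
have := outer_ge0 hB hm set0; rewrite (kmeasure0 hB hm); lra.
Qed.

Lemma adjoin_measure_kmeasure : is_kmeasure (adjoin B S) (adjoin_measure B m S).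
Proof.
split; [|split].
- move=> c _; have := inner_ge0 hB hm (c `&` S); have := outer_ge0 hB hm (c `\` S).
  rewrite /adjoin_measure; lra.
- by rewrite adjoin_measure_agree ?(kmeasureT hm) //; exact: algebraT.
- move=> c1 c2 [a [b [ha hb e1]]] _ dis.
  change (adjoin_measure B m S (c1 `|` c2) =
    adjoin_measure B m S c1 + adjoin_measure B m S c2).
  rewrite /adjoin_measure setIUl setDUD (innerU hB hm (a := a)) ?(outerU hB hm (a := b)) //;
    first lra.
  all: by move=> v [+ v_S]; have := dis v; rewrite e1 /=; tauto.
Qed.

End Adjoin.

Section Extension.
Variables (D B0 : set (set point)) (m0 : set point -> R).
Hypotheses (hD : setalgebra D) (hB0 : setalgebra B0) (B0D : B0 `<=` D)
  (hm0 : is_kmeasure B0 m0).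

Record partial_extension := PartialExtension {
  pdom : set (set point);
  pmeas : set point -> R;
  pdom_algebra : setalgebra pdom;
  pdom_ge : B0 `<=` pdom;
  pdom_le : pdom `<=` D;
  pmeas_kmeasure : is_kmeasure pdom pmeas;
  pmeas_agree : agree B0 pmeas m0 }.

Definition extends (p q : partial_extension) :=
  pdom p `<=` pdom q /\ agree (pdom p) (pmeas q) (pmeas p).

Lemma extends_refl p : extends p p.
Proof. by split. Qed.

Lemma extends_trans p q r : extends p q -> extends q r -> extends p r.
Proof.
move=> [pq qp] [qr rq]; split=> [a /pq /qr //| a pa].
by rewrite rq ?qp //; exact: pq.
Qed.

Lemma adjoin_extension p S : D S -> exists2 q, extends p q & pdom q S.
Proof.
move=> hS; case: p => Bp mp hBp B0p pD hmp mp0.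
have B0q : B0 `<=` adjoin Bp S by move=> a /B0p; exact: adjoin_ge.
have mq0 : agree B0 (adjoin_measure Bp mp S) m0.
  by move=> a ha; rewrite adjoin_measure_agree //; [exact: mp0 | exact: B0p].
exists (PartialExtension (adjoin_algebra S hBp) B0q (adjoin_le hD pD hS)
  (adjoin_measure_kmeasure S hBp hmp) mq0).
  by split; [exact: adjoin_ge | exact: adjoin_measure_agree].
exact: adjoin_self.
Qed.

Section ChainUnion.
Variables (C : set partial_extension) (p0 : partial_extension).
Hypotheses (C_chain : total_on C extends) (Cp0 : C p0).

Definition union_dom : set (set point) := [set a | exists2 p, C p & pdom p a].

Definition union_meas (a : set point) : R :=
  match pselect (exists p, C p /\ pdom p a) with
  | left h => pmeas (sval (cid h)) a
  | right _ => 0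
  end.

Lemma union_measE p a : C p -> pdom p a -> union_meas a = pmeas p a.
Proof.
move=> Cp pa; rewrite /union_meas; case: pselect => [h | []]; last by exists p.
case: (cid h) => q [Cq qa] /=.
by case: (C_chain Cp Cq) => [[_ ->] | [_ <-]].
Qed.

Lemma union_dom_directed p q : C p -> C q ->
  exists r, [/\ C r, pdom p `<=` pdom r & pdom q `<=` pdom r].
Proof.
move=> Cp Cq; case: (C_chain Cp Cq) => [[pq _] | [qp _]].
- by exists q; split.
- by exists p; split.
Qed.

Lemma union_dom_algebra : setalgebra union_dom.
Proof.
split; first by exists p0; last exact: (algebraT (pdom_algebra p0)).
- by move=> a [p Cp pa]; exists p; last exact: (algebraC (pdom_algebra p)).
- move=> a1 a2 [p1 Cp1 pa1] [p2 Cp2 pa2].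
  have [r [Cr pr1 pr2]] := union_dom_directed Cp1 Cp2.
  exists r => //.
  by apply: (algebraI (pdom_algebra r)); [exact: pr1 | exact: pr2].
Qed.

Lemma union_meas_kmeasure : is_kmeasure union_dom union_meas.
Proof.
split; [|split].
- move=> a [p Cp pa]; rewrite (union_measE Cp pa).
  exact: kmeasure_ge0 (pmeas_kmeasure p) _ pa.
- rewrite (union_measE Cp0 (algebraT (pdom_algebra p0))).
  exact: kmeasureT (pmeas_kmeasure p0).
- move=> a1 a2 [p1 Cp1 pa1] [p2 Cp2 pa2] dis.
  have [r [Cr /(_ _ pa1) ra1 /(_ _ pa2) ra2]] := union_dom_directed Cp1 Cp2.
  have hr := pdom_algebra r.
  rewrite !(union_measE Cr) //; last exact: algebraU.
  exact: kmeasureU (pmeas_kmeasure r) _ _ ra1 ra2 dis.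
Qed.

Lemma union_dom_ge : B0 `<=` union_dom.
Proof. by move=> a ha; exists p0 => //; exact: pdom_ge. Qed.

Lemma union_dom_le : union_dom `<=` D.
Proof. by move=> a [p _ pa]; exact: pdom_le pa. Qed.

Lemma union_meas_agree : agree B0 union_meas m0.
Proof.
by move=> a ha; rewrite (union_measE Cp0 (pdom_ge p0 ha)); exact: pmeas_agree.
Qed.

Definition union_extension := PartialExtension union_dom_algebra union_dom_ge
  union_dom_le union_meas_kmeasure union_meas_agree.

Lemma union_extension_ub p : C p -> extends p union_extension.
Proof. by move=> Cp; split=> [a pa | a pa]; [exists p | exact: union_measE]. Qed.

End ChainUnion.

Lemma kmeasure_extension : exists m, is_kmeasure D m /\ agree B0 m m0.
Proof.
pose p0 := PartialExtension hB0 (@subset_refl _ B0) B0D hm0 (fun _ _ => erefl).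
pose le p q := `[< extends p q >].
have [p pmax] : exists p, premaximal le p.
  apply: (ZL_preorder p0) => [p | p q r /asboolP pq /asboolP qr | C C_chain].
  - exact/asboolP/extends_refl.
  - exact/asboolP/(extends_trans pq qr).
  - have C_chain' : total_on C extends.
      by move=> p q Cp Cq; case: (C_chain p q Cp Cq) => /asboolP; [left | right].
    have [[q Cq] | C0] := pselect (exists q, C q).
      by exists (union_extension C_chain' Cq) => r Cr; exact/asboolP/union_extension_ub.
    by exists p0 => r Cr; case: C0; exists r.
have Dp : D `<=` pdom p.
  move=> S hS; have [q pq qS] := adjoin_extension p hS.
  by have /asboolP [+ _] := pmax q (asboolT pq); apply.
exists (pmeas p); split; last exact: pmeas_agree.
exact: kmeasure_sub Dp (pmeas_kmeasure p).
Qed.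

End Extension.

Lemma kmeasure_extension_inner D B0 m0 S : setalgebra D -> setalgebra B0 -> B0 `<=` D ->
  is_kmeasure B0 m0 -> D S ->
  exists m, [/\ is_kmeasure D m, agree B0 m m0 & m S = inner B0 m0 S].
Proof.
move=> hD hB0 B0D hm0 hS.
have [m [hm m_adj]] := kmeasure_extension hD (adjoin_algebra S hB0)
  (adjoin_le hD B0D hS) (adjoin_measure_kmeasure S hB0 hm0).
exists m; split=> //.
- by move=> a ha; rewrite m_adj ?adjoin_measure_agree //; exact: adjoin_ge.
- by rewrite m_adj ?adjoin_measure_self //; exact: adjoin_self.
Qed.

Lemma inner_of_unique_extension D B0 m : setalgebra D -> setalgebra B0 -> B0 `<=` D ->
  is_kmeasure D m ->
  (forall m', is_kmeasure D m' -> agree B0 m' m -> agree D m' m) ->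
  forall S, D S -> m S = inner B0 m S.
Proof.
move=> hD hB0 B0D hm uniq S hS.
have [m' [hm' m'm m'S]] := kmeasure_extension_inner hD hB0 B0D (kmeasure_sub B0D hm) hS.
by rewrite -m'S uniq.
Qed.

Lemma agree_of_inner_regular B0 B m w : setalgebra B0 -> setalgebra B -> B0 `<=` B ->
  is_kmeasure B m -> is_kmeasure B w ->
  (forall S, B S -> m S = inner B0 m S) -> agree B0 w m -> agree B w m.
Proof.
move=> hB0 hB B0B hm hw m_reg wm S hS; symmetry.
apply: (agree_of_le hB hm hw) => // {}S {}hS; rewrite m_reg //.
apply: inner_le (hB0) (kmeasure_sub B0B hm) _ _ _ => a ha aS.
by rewrite -wm //; apply: (kmeasure_le hB hw) => //; exact: B0B.
Qed.

End SetAlgebra.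

Section Definability.
Variables (L : Language) (M : Structure L).
Local Notation point := (nat -> M).

Lemma eq_teval (t : term M) (v w : point) :
  (forall j, tfv t j -> v j = w j) -> teval v t = teval w t.
Proof.
elim: t v w => [i | c | f a IH] v w /= vw; [exact: vw | by [] |].
by congr fI; apply: funext => k; apply: IH => j hj; apply: vw; exists k.
Qed.

Lemma eq_sat (q : formula M) (v w : point) :
  (forall j, ffv q j -> v j = w j) -> sat v q <-> sat w q.
Proof.
elim: q v w => [|t1 t2|r a|q IH|q1 IH1 q2 IH2|i q IH] v w /= vw.
- by [].
- by rewrite !(@eq_teval _ v w) // => j hj; apply: vw; [right | left].
- have -> // : (fun k => teval v (a k)) = (fun k => teval w (a k)).
  by apply: funext => k; apply: eq_teval => j hj; apply: vw; exists k.
- by have := IH v w vw; tauto.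
- have := IH1 v w (fun j hj => vw j (or_introl hj)).
  have := IH2 v w (fun j hj => vw j (or_intror hj)); tauto.
- have vw_upd b : forall j, ffv q j -> upd v i b j = upd w i b j.
    by move=> j hj; rewrite /upd; case: eqP => // ji; exact: vw (conj (not_eq_sym ji) hj).
  by split=> -[b hb]; exists b; apply/(IH _ _ (vw_upd b)).
Qed.

Fixpoint exists_vars (l : seq nat) (q : formula M) : formula M :=
  if l is i :: l' then Ex i (exists_vars l' q) else q.

Lemma ffv_exists_vars l q j : ffv (exists_vars l q) j -> ffv q j /\ j \notin l.
Proof.
elim: l => [|i l IH] /=; first by split.
move=> [ij /IH [qj jl]]; split=> //.
by rewrite in_cons negb_or jl andbT; apply/eqP => ji; exact: ij (esym ji).
Qed.

Lemma fpar_exists_vars l q c : fpar (exists_vars l q) c -> fpar q c.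
Proof. by elim: l. Qed.

Lemma sat_exists_vars l q (v : point) : sat v q -> sat v (exists_vars l q).
Proof.
elim: l => [|i l IH] //= vq; exists (v i).
have -> : upd v i (v i) = v by apply: funext => j; rewrite /upd; case: eqP => [-> |].
exact: IH.
Qed.

Lemma exists_varsP l q (v : point) : sat v (exists_vars l q) ->
  exists2 w : point, (forall j, j \notin l -> w j = v j) & sat w q.
Proof.
elim: l v => [|i l IH] v /=; first by exists v.
move=> [b /IH [w wv wq]]; exists w => // j.
by rewrite in_cons negb_or => /andP [ji jl]; rewrite wv // /upd (negbTE ji).
Qed.

Lemma Lform_algebra (C : M -> Prop) xs : setalgebra (Lform C xs).
Proof.
split.
- exists (Neg (Fals M)); do 2 split=> //.
  by apply/funext => v /=; apply/propext; tauto.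
- by move=> S [q [qx [qC ->]]]; exists (Neg q).
- move=> S1 S2 [q1 [q1x [q1C ->]]] [q2 [q2x [q2C ->]]]; exists (And q1 q2).
  by split; [move=> i [/q1x | /q2x] | split=> // c [/q1C | /q2C]].
Qed.

Lemma Lform_mono_par (C C' : M -> Prop) xs : C `<=` C' -> Lform C xs `<=` Lform C' xs.
Proof. by move=> CC' S [q [qx [qC ->]]]; exists q; split=> //; split=> // c /qC /CC'. Qed.

Lemma Lform_mono_vars (C : M -> Prop) xs ys : {subset xs <= ys} -> Lform C xs `<=` Lform C ys.
Proof. by move=> xy S [q [qx [qC ->]]]; exists q; split=> // i /qx /xy. Qed.

Lemma Lform_projection (A : M -> Prop) x y S T : (forall i, i \in x -> i \notin y) ->
  Lform A (x ++ y) S -> Lform (@setTM L M) y T -> S `<=` T ->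
  exists S', [/\ Lform A y S', S `<=` S' & S' `<=` T].
Proof.
move=> xy [q [qxy [qA ->]]] [qT [qTy [_ ->]]] ST.
exists (fun v => sat v (exists_vars x q)); split.
- exists (exists_vars x q); split; last by split=> // c /fpar_exists_vars /qA.
  by move=> i /ffv_exists_vars [/qxy]; rewrite mem_cat => /orP [-> //| ->].
- by move=> v; apply: sat_exists_vars.
- move=> v /exists_varsP [w wv /ST wqT].
  apply/(eq_sat (v := w)) => // j /qTy jy; apply: wv.
  by apply/negP => /xy; rewrite jy.
Qed.

Lemma inner_le_projection (A : M -> Prop) x y (lam nu : set point -> R) T :
  (forall i, i \in x -> i \notin y) ->
  is_kmeasure (Lform A (x ++ y)) lam -> is_kmeasure (Lform (@setTM L M) y) nu ->
  agree (Lform A y) lam nu -> Lform (@setTM L M) y T ->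
  inner (Lform A (x ++ y)) lam T <= nu T.
Proof.
move=> xy hlam hnu lam_nu hT; apply: (inner_le (Lform_algebra _ _) hlam) => a ha aT.
have [a' [ha' aa' a'T]] := Lform_projection xy ha hT aT.
have ha'_xy : Lform A (x ++ y) a' by apply: Lform_mono_vars ha' => i yi; rewrite mem_cat yi orbT.
have ha'_T : Lform (@setTM L M) y a' by exact: Lform_mono_par ha'.
apply: (@Rle_trans _ (lam a')); first exact: (kmeasure_le (Lform_algebra _ _) hlam ha ha'_xy aa').
by rewrite lam_nu //; exact: (kmeasure_le (Lform_algebra _ _) hnu ha'_T hT a'T).
Qed.

End Definability.

Theorem proposition4p7 (L : Language) (U : Structure L) (K : Type)
  (HU : monster U K) (A : U -> Prop) (HA : @small L U K A)
  (x y : seq nat) (Hxy : forall i, i \in x -> i \notin y)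
  (mu nu : ((nat -> U) -> Prop) -> R)
  (Hmu : is_kmeasure (Lform (@setTM L U) x) mu)
  (Hnu : is_kmeasure (Lform (@setTM L U) y) nu) :
  smooth A x mu -> E_ge A x y mu nu -> smooth A y nu.
Proof.
move=> mu_smooth [lam [hlam [lam_mu lam_ext]]] nu' hnu' nu'_nu.
have x_xy : {subset x <= x ++ y} by move=> i xi; rewrite mem_cat xi.
have y_xy : {subset y <= x ++ y} by move=> i yi; rewrite mem_cat yi orbT.
have A_T : A `<=` @setTM L U by [].
have mu_reg := inner_of_unique_extension (Lform_algebra _ x) (Lform_algebra A x)
  (Lform_mono_par A_T) Hmu mu_smooth.
suff le_nu T : Lform (@setTM L U) y T -> nu T <= nu' T.
  by move=> T hT; rewrite (agree_of_le (Lform_algebra _ y) Hnu hnu' le_nu).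
move=> hT.
have [w [hw w_lam wT]] := kmeasure_extension_inner (Lform_algebra _ (x ++ y))
  (Lform_algebra A (x ++ y)) (Lform_mono_par A_T) hlam (Lform_mono_vars y_xy hT).
have w_mu : agree (Lform (@setTM L U) x) w mu.
  apply: (agree_of_inner_regular (Lform_algebra A x) (Lform_algebra _ x)
    (Lform_mono_par A_T) Hmu (kmeasure_sub (Lform_mono_vars x_xy) hw) mu_reg).
  by move=> a ha; rewrite w_lam ?lam_mu //; exact: Lform_mono_vars ha.
have w_nu := lam_ext w hw w_lam w_mu.
have lam_nu' : agree (Lform A y) lam nu'.
  move=> a ha; rewrite nu'_nu // -w_nu ?w_lam //.
  - exact: (Lform_mono_vars y_xy ha).
  - exact: (Lform_mono_par A_T ha).
by rewrite -w_nu // wT; exact: inner_le_projection Hxy hlam hnu' lam_nu' hT.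
Qed.
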